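(* For every family of unsatisfiable CNFs $\mathcal{F}=\{F_n\}$ with $w(\mathcal{F}\vdash_{\mathsf{Res}}\bot)>w_F$, the CNF family $\mathcal{F}^{w}_{\mathsf{wLB}}$ has resolution refutations of width $O(w_F\log N)$, where $N$ is the number of variables of $\mathcal{F}^w_{\mathsf{wLB}}$.
   Context: $\mathcal{F}^w_{\mathsf{wLB}}$ is the CNF encoding of the statement ``$F_n$ has no width-$w_F$ resolution refutation'': its variables encode (in binary) a purported resolution refutation $C_0,\dots,C_{L-1}$ of $F_n$ in which each node consists of at most $w_F$ literals, a tag resolution/weakening, the indices of its (earlier) predecessors and the resolved variable (each node uses $O(w_F\log n+\log L)$ bits); for every potential solution of the corresponding refuter problem (an index $i$ whose node violates the validity conditions: resolution $C_j=x_a\vee D$, $C_k=\overline x_a\vee E$, $C_i=D\vee E$; weakening $C_i=C_j\vee D$; last clause empty), the CNF contains clauses expressing that this node is not invalid, obtained by writing the negation of the block-depth-$3$ verifying decision tree as a CNF. Thus the CNF is unsatisfiable exactly because the width lower bound holds. *)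

From mathcomp Require Import all_boot.
Set Implicit Arguments. Unset Strict Implicit. Unset Printing Implicit Defensive.

(* A literal is (variable, polarity): (x, true) is x, (x, false) is ~x. *)
Definition lit := (nat * bool)%type.
(* A clause is read as the SET of its literals. *)
Definition clause := seq lit.
Definition cnf := seq clause.

Definition lit_true (a : nat -> bool) (l : lit) : bool := a l.1 == l.2.
Definition clause_sat (a : nat -> bool) (C : clause) : bool := has (lit_true a) C.
Definition satisfiable (F : cnf) : Prop := exists a : nat -> bool, all (clause_sat a) F.

Definition width (C : clause) : nat := size (undup C).

Definition subclause (A B : clause) : bool := all (fun l => l \in B) A.
Definition clause_eq (A B : clause) : bool := subclause A B && subclause B A.

Definition is_resolvent (A B : clause) (x : nat) (C : clause) : bool :=
  [&& (x, true) \in A, (x, false) \in B &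
      clause_eq C ([seq l <- A | l != (x, true)] ++ [seq l <- B | l != (x, false)])].

Definition res_refutation (Ax : clause -> Prop) (P : seq clause) : Prop :=
  (forall i, i < size P ->
     (exists2 A, Ax A & clause_eq A (nth [::] P i)) \/
     (exists j k x, [/\ j < i, k < i &
                      is_resolvent (nth [::] P j) (nth [::] P k) x (nth [::] P i)]))
  /\ [::] \in P.

Definition has_refutation_of_width (Ax : clause -> Prop) (w : nat) : Prop :=
  exists P, res_refutation Ax P /\ all (fun C => width C <= w) P.

Definition cnf_axioms (F : cnf) : clause -> Prop := fun C => C \in F.

(* Parameters: F (the CNF F_n), n = number of variables of F, w = w_F,
   L = length of the purported refutation C_0, ..., C_{L-1}.            *)

Definition nbits (k : nat) : nat := up_log 2 k.

Definition decode (a : nat -> bool) (start len : nat) : nat :=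
  \sum_(t < len) (a (start + t) : nat) * 2 ^ t.

Section Encoding.
Variables (F : cnf) (n w L : nat).

Definition var_bits := nbits n.
Definition idx_bits := nbits L.
(* a literal slot: present bit, sign bit, variable index *)
Definition slot_size := var_bits.+2.
(* block of a node: w literal slots, axiom-tag bit, resolution-tag bit,
   two predecessor indices, resolved variable *)
Definition block_size := w * slot_size + 2 + 2 * idx_bits + var_bits.
(* N = number of variables of F^w_wLB *)
Definition wLB_nvars := L * block_size.

Definition boff (i : nat) := i * block_size.
Definition soff (i s : nat) := boff i + s * slot_size.
Definition toff (i : nat) := boff i + w * slot_size.

Definition slot_present (a : nat -> bool) i s := a (soff i s).
Definition slot_lit (a : nat -> bool) i s : lit := (decode a (soff i s).+2 var_bits, a (soff i s).+1).
Definition node_clause (a : nat -> bool) (i : nat) : clause :=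
  [seq slot_lit a i s | s <- [seq s <- iota 0 w | slot_present a i s]].
Definition tag_axiom (a : nat -> bool) i := a (toff i).
Definition tag_res (a : nat -> bool) i := a (toff i).+1.
Definition pred1 (a : nat -> bool) i := decode a (toff i + 2) idx_bits.
Definition pred2 (a : nat -> bool) i := decode a (toff i + 2 + idx_bits) idx_bits.
Definition resvar (a : nat -> bool) i := decode a (toff i + 2 + 2 * idx_bits) var_bits.

Definition node_valid (a : nat -> bool) (i : nat) : bool :=
  let C := node_clause a in
  [&& all (fun l => l.1 < n) (C i),
      (i == L.-1) ==> (C i == [::]) &
      if tag_axiom a i then has (fun A => clause_eq (C i) A) F
      else if tag_res a i then
        [&& pred1 a i < i, pred2 a i < i, resvar a i < n &
            is_resolvent (C (pred1 a i)) (C (pred2 a i)) (resvar a i) (C i)]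
      else (pred1 a i < i) && subclause (C (pred1 a i)) (C i)].

(* blocks read by the (block-depth-3) verifying decision tree for node i *)
Definition queried_blocks (a : nat -> bool) (i : nat) : seq nat :=
  i :: (if tag_axiom a i then [::]
        else if tag_res a i then [seq j <- [:: pred1 a i; pred2 a i] | j < i]
        else [seq j <- [:: pred1 a i] | j < i]).

Definition queried_vars (a : nat -> bool) i : seq nat :=
  flatten [seq iota (boff j) block_size | j <- queried_blocks a i].

(* negation of the path of the decision tree followed under a *)
Definition path_clause (a : nat -> bool) i : clause := [seq (p, ~~ a p) | p <- queried_vars a i].

(* the clauses of F^w_wLB: for every index i < L and every accepting path
   (one on which node i is found invalid), the negation of that path *)
Definition wLB_axiom (C : clause) : Prop :=
  exists (i : nat) (a : nat -> bool), [/\ i < L, ~~ node_valid a i & C = path_clause a i].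

End Encoding.

From Pilot Require Import Defs.
From mathcomp Require Import all_boot zify.
From Stdlib Require Import Classical.
Set Implicit Arguments. Unset Strict Implicit. Unset Printing Implicit Defensive.

(* Call a node of the encoded refutation bad when its clause is not subsumed
   by a width-[w_F] derivation from [F_n].  The empty clause is bad, and a
   valid bad node has a bad predecessor among the blocks read by its verifying
   decision tree.  So, by strong induction, for every node [i] that is bad or
   last and every assignment [a], some derivable clause is contained in the
   negation of [a] on block [i]: the decision tree for node [i] reads at most
   three blocks, and each of its leaves is covered either by an axiom of
   [F^w_wLB] (node [i] is invalid there) or by such a clause for a bad earlier
   block.  A decision tree on [d] variables whose leaves are covered by clauses
   of width [W - d] yields a derivation of width [W], here
   [W = 4 * block size = O(w_F log N)]. *)

(** * Tree-like resolution derivations *)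

Definition resolve (A B : clause) (x : nat) : clause :=
  [seq l <- A | l != (x, true)] ++ [seq l <- B | l != (x, false)].

Inductive derivable (Ax : clause -> Prop) (W : nat) : clause -> Prop :=
| derivable_axiom A : Ax A -> width A <= W -> derivable Ax W A
| derivable_resolve A B x : derivable Ax W A -> derivable Ax W B ->
    (x, true) \in A -> (x, false) \in B -> width (resolve A B x) <= W ->
    derivable Ax W (resolve A B x).

Lemma subclauseP A B : reflect {subset A <= B} (subclause A B).
Proof. exact: allP. Qed.

Lemma subclause_refl C : subclause C C.
Proof. exact/subclauseP. Qed.

Lemma subclause_trans A B C : subclause A B -> subclause B C -> subclause A C.
Proof. by move=> /subclauseP h1 /subclauseP h2; apply/subclauseP => l /h1 /h2. Qed.

Lemma subclause_nil C : subclause C [::] -> C = [::].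
Proof. by case: C => // l C /andP []. Qed.

Lemma subclause_cons_mem l C S : l \in S -> subclause C (l :: S) -> subclause C S.
Proof.
move=> lS /subclauseP hC; apply/subclauseP => l' /hC.
by rewrite in_cons => /predU1P [->|].
Qed.

Lemma subclause_cons_notin l C S : l \notin C -> subclause C (l :: S) -> subclause C S.
Proof.
move=> lC /subclauseP hC; apply/subclauseP => l' hl'.
by move: (hC _ hl'); rewrite in_cons => /predU1P [e|//]; rewrite -e hl' in lC.
Qed.

Lemma width_le_size C : width C <= size C.
Proof. exact: size_undup. Qed.

Lemma width_subclause A B : subclause A B -> width A <= width B.
Proof.
move/subclauseP=> h; apply: uniq_leq_size; first exact: undup_uniq.
by move=> l; rewrite !mem_undup => /h.
Qed.

Lemma mem_resolve A B x l :
  l \in resolve A B x = ((l != (x, true)) && (l \in A)) || ((l != (x, false)) && (l \in B)).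
Proof. by rewrite mem_cat !mem_filter. Qed.

Lemma is_resolvent_resolve A B x :
  (x, true) \in A -> (x, false) \in B -> is_resolvent A B x (resolve A B x).
Proof. by move=> hA hB; rewrite /is_resolvent hA hB /clause_eq subclause_refl. Qed.

Lemma is_resolvent_premises A B x C : is_resolvent A B x C ->
  subclause A ((x, true) :: C) /\ subclause B ((x, false) :: C).
Proof.
case/and3P=> _ _ /andP [_ /subclauseP hC]; split; apply/subclauseP => l hl;
  rewrite in_cons; case: eqP => //= ne; apply: hC; rewrite mem_resolve hl.
  by move/eqP: ne => ->.
by move/eqP: ne => ->; rewrite orbT.
Qed.

Lemma derivable_cut Ax W E x C0 C1 : width E <= W ->
  derivable Ax W C0 -> derivable Ax W C1 ->
  subclause C0 ((x, true) :: E) -> subclause C1 ((x, false) :: E) ->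
  exists2 C, derivable Ax W C & subclause C E.
Proof.
move=> hE d0 d1 h0 h1.
have [x0|] := boolP ((x, true) \in C0); last by move/subclause_cons_notin/(_ h0); exists C0.
have [x1|] := boolP ((x, false) \in C1); last by move/subclause_cons_notin/(_ h1); exists C1.
have hsub : subclause (resolve C0 C1 x) E.
  move/subclauseP: h0 => h0; move/subclauseP: h1 => h1.
  apply/subclauseP => l; rewrite mem_resolve.
  by case/orP=> /andP [ne /[dup] hl];
    [move/h0 | move/h1] => /predU1P [e|//]; rewrite e eqxx in ne.
exists (resolve C0 C1 x) => //; apply: derivable_resolve => //.
exact: leq_trans (width_subclause hsub) hE.
Qed.

Definition neg_assign (a : nat -> bool) (X : seq nat) : clause :=
  [seq (p, ~~ a p) | p <- X].

Lemma neg_assign_subset a X Y : {subset X <= Y} -> subclause (neg_assign a X) (neg_assign a Y).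
Proof.
move=> h; apply/subclauseP => l /mapP [p hp ->].
exact: (map_f (fun q => (q, ~~ a q)) (h _ hp)).
Qed.

Definition override (a b : nat -> bool) (S : seq nat) (p : nat) : bool :=
  if p \in S then a p else b p.

Lemma neg_assign_override a b S X :
  subclause (neg_assign (override a b S) X) (neg_assign b X ++ neg_assign a S).
Proof.
apply/subclauseP => l /mapP [p hp ->]; rewrite mem_cat /override.
case: ifP => hpS; last by rewrite (map_f (fun q => (q, ~~ b q)) hp).
by rewrite (map_f (fun q => (q, ~~ a q)) hpS) orbT.
Qed.

(* [neg_assign b X] is the negated branch that [b] follows in the complete
   decision tree on [X]. *)
Lemma derivable_decision_tree Ax W E X : size X + size E <= W ->
  (forall b, exists2 C, derivable Ax W C & subclause C (neg_assign b X ++ E)) ->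
  exists2 C, derivable Ax W C & subclause C E.
Proof.
elim: X => [|p X IH] /= hs leaves; first exact: (leaves xpredT).
apply: IH => [|b]; first lia.
have [pX|pX] := boolP (p \in X).
  have [C dC hC] := leaves b; exists C => //; apply: subclause_cons_mem hC.
  by rewrite mem_cat (map_f (fun q => (q, ~~ b q)) pX).
pose set_p t q := if q == p then t else b q.
have neg_set t : neg_assign (set_p t) X = neg_assign b X.
  apply/eq_in_map => q qX; rewrite /set_p; case: eqP => // e.
  by rewrite -e qX in pX.
have [C1 d1 h1] := leaves (set_p true); have [C0 d0 h0] := leaves (set_p false).
rewrite !neg_set /set_p eqxx /= in h0 h1.
apply: derivable_cut d0 d1 h0 h1.
by apply: leq_trans (width_le_size _) _; rewrite size_cat size_map; lia.
Qed.

(** * From tree-like derivations to refutations *)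

Definition valid_lines (Ax : clause -> Prop) (P : seq clause) : Prop :=
  forall i, i < size P ->
     (exists2 A, Ax A & clause_eq A (nth [::] P i)) \/
     (exists j k x, [/\ j < i, k < i &
                      is_resolvent (nth [::] P j) (nth [::] P k) x (nth [::] P i)]).

Lemma valid_lines_cat Ax P1 P2 :
  valid_lines Ax P1 -> valid_lines Ax P2 -> valid_lines Ax (P1 ++ P2).
Proof.
move=> h1 h2 i; rewrite size_cat => hi.
have [lt_i|le_i] := ltnP i (size P1).
  case: (h1 i lt_i) => [[A hA hc]|[j [k [x [hj hk hr]]]]].
    by left; exists A; rewrite // nth_cat lt_i.
  right; exists j, k, x; split => //.
  by rewrite !nth_cat lt_i (ltn_trans hj lt_i) (ltn_trans hk lt_i).
have shift t : nth [::] (P1 ++ P2) (t + size P1) = nth [::] P2 t.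
  by rewrite nth_cat ltnNge leq_addl /= addnK.
have -> : i = (i - size P1) + size P1 by lia.
case: (h2 (i - size P1)) => [|[A hA hc]|[j [k [x [hj hk hr]]]]]; first lia.
  by left; exists A; rewrite // shift.
by right; exists (j + size P1), (k + size P1), x; rewrite !shift; split => //; lia.
Qed.

Lemma valid_lines_rcons Ax P C j k x : valid_lines Ax P -> j < size P -> k < size P ->
  is_resolvent (nth [::] P j) (nth [::] P k) x C -> valid_lines Ax (rcons P C).
Proof.
move=> hP hj hk hr i; rewrite size_rcons ltnS leq_eqVlt => /predU1P [->|hi].
  by right; exists j, k, x; rewrite !nth_rcons hj hk ltnn eqxx.
case: (hP i hi) => [[A hA hc]|[j' [k' [y [hj' hk' hr']]]]].
  by left; exists A; rewrite // nth_rcons hi.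
right; exists j', k', y; split => //.
by rewrite !nth_rcons hi (ltn_trans hj' hi) (ltn_trans hk' hi).
Qed.

Lemma derivable_lines Ax W C : derivable Ax W C ->
  exists P, [/\ valid_lines Ax P, all (fun D => width D <= W) P & C \in P].
Proof.
elim=> {C} [A hA hw | A B x _ [PA [vA wA iA]] _ [PB [vB wB iB]] hA hB hw].
  exists [:: A]; split; rewrite ?mem_seq1 //=; last by rewrite hw.
  move=> i; rewrite ltnS leqn0 => /eqP ->; left; exists A => //.
  by rewrite /clause_eq /= subclause_refl.
exists (rcons (PA ++ PB) (resolve A B x)); split.
- apply: (valid_lines_rcons (j := index A PA) (k := size PA + index B PB) (x := x)).
  + exact: valid_lines_cat.
  + by rewrite size_cat ltn_addr // index_mem.
  + by rewrite size_cat ltn_add2l index_mem.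
  + rewrite nth_cat index_mem iA nth_index // nth_cat ltnNge leq_addr /= addKn.
    by rewrite nth_index //; apply: is_resolvent_resolve.
- by rewrite all_rcons hw all_cat wA wB.
- by rewrite mem_rcons mem_head.
Qed.

Definition subsumed (Ax : clause -> Prop) (W : nat) (C : clause) : Prop :=
  exists2 D, derivable Ax W D & subclause D C.

Lemma subsumed_nil_refutation Ax W : subsumed Ax W [::] -> has_refutation_of_width Ax W.
Proof.
case=> D dD /subclause_nil eD; rewrite eD in dD.
by have [P [vP wP iP]] := derivable_lines dD; exists P.
Qed.

Lemma subsumed_axiom Ax W A C : Ax A -> width A <= W -> subclause A C -> subsumed Ax W C.
Proof. by move=> hA hw hAC; exists A => //; apply: derivable_axiom. Qed.

Lemma subsumed_weaken Ax W A C : subsumed Ax W A -> subclause A C -> subsumed Ax W C.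
Proof. by case=> D dD hD hAC; exists D => //; apply: subclause_trans hD hAC. Qed.

Lemma subsumed_resolvent Ax W A B x C : subsumed Ax W A -> subsumed Ax W B ->
  is_resolvent A B x C -> width C <= W -> subsumed Ax W C.
Proof.
case=> A' dA hA [B' dB hB] /is_resolvent_premises [hAC hBC] hw.
exact: derivable_cut hw dA dB (subclause_trans hA hAC) (subclause_trans hB hBC).
Qed.

(** * The encoded refutation *)

Section Encoding.
Variables (F : cnf) (n w L : nat).

Local Notation bs := (block_size n w L).
Local Notation node_clause := (node_clause n w L).
Local Notation queried_blocks := (queried_blocks n w L).
Local Notation queried_vars := (queried_vars n w L).

Definition block (i : nat) : seq nat := iota (boff n w L i) bs.

Lemma decode_eq_in a b st len :
  (forall t, t < len -> a (st + t) = b (st + t)) -> decode a st len = decode b st len.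
Proof. by move=> h; apply: eq_bigr => t _; rewrite h. Qed.

Lemma slot_in_block i s t : s < w -> t < slot_size n -> soff n w L i s + t \in block i.
Proof.
move=> hs ht; rewrite mem_iota /soff /boff /block_size.
have : s.+1 * slot_size n <= w * slot_size n by rewrite leq_mul2r hs orbT.
lia.
Qed.

Lemma tags_in_block i t : t < 2 + 2 * idx_bits L -> toff n w L i + t \in block i.
Proof. by move=> ht; rewrite mem_iota /toff /boff /block_size; lia. Qed.

Lemma node_clause_eq_in a b i : {in block i, a =1 b} -> node_clause a i = node_clause b i.
Proof.
move=> ab.
have slot_eq s t : s < w -> t < slot_size n -> a (soff n w L i s + t) = b (soff n w L i s + t).
  by move=> hs ht; apply/ab/slot_in_block.
rewrite /node_clause (@eq_in_filter _ _ (slot_present n w L b i)) => [|s]; last first.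
  by rewrite mem_iota => hs; rewrite /slot_present -(addn0 (soff _ _ _ _ _)) slot_eq.
apply/eq_in_map => s; rewrite mem_filter mem_iota => /andP [_ hs].
rewrite /slot_lit; congr pair; last by rewrite -[(soff n w L i s).+1]addn1 slot_eq.
apply: decode_eq_in => t ht.
by rewrite -[(soff n w L i s).+2]addn2 -addnA slot_eq // /slot_size; lia.
Qed.

Lemma queried_vars_eq_in a b i : {in block i, a =1 b} -> queried_vars a i = queried_vars b i.
Proof.
move=> ab.
have tag_eq t : t < 2 + 2 * idx_bits L -> a (toff n w L i + t) = b (toff n w L i + t).
  by move=> ht; apply/ab/tags_in_block.
have ta : tag_axiom n w L a i = tag_axiom n w L b i.
  by rewrite /tag_axiom -(addn0 (toff _ _ _ _)) tag_eq.
have tr : tag_res n w L a i = tag_res n w L b i.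
  by rewrite /tag_res -(addn1 (toff _ _ _ _)) tag_eq.
have p1 : Defs.pred1 n w L a i = Defs.pred1 n w L b i.
  by apply: decode_eq_in => t ht; rewrite -[_ + 2 + t]addnA tag_eq //; lia.
have p2 : Defs.pred2 n w L a i = Defs.pred2 n w L b i.
  apply: decode_eq_in => t ht.
  by rewrite -[_ + 2 + _ + t]addnA -[_ + 2 + _]addnA tag_eq //; lia.
by rewrite /queried_vars /queried_blocks ta tr p1 p2.
Qed.

Lemma size_queried_vars a i : size (queried_vars a i) <= 3 * bs.
Proof.
have -> : size (queried_vars a i) = size (queried_blocks a i) * bs.
  by rewrite /queried_vars; elim: (queried_blocks a i) => //= j s IH; rewrite size_cat size_iota IH.
rewrite leq_mul2r /queried_blocks; apply/orP; right.
by case: ifP => // _; case: ifP => _ /=; repeat case: ifP.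
Qed.

Lemma block_sub_queried_vars a i j :
  j \in queried_blocks a i -> {subset block j <= queried_vars a i}.
Proof.
move=> hj p hp; apply/flattenP; exists (block j) => //.
exact: (map_f (fun j => iota (boff n w L j) bs) hj).
Qed.

Lemma width_node_clause a i : width (node_clause a i) <= w.
Proof.
apply: leq_trans (width_le_size _) _.
by rewrite size_map size_filter (leq_trans (count_size _ _)) // size_iota.
Qed.

Definition bad_node (a : nat -> bool) (i : nat) : Prop :=
  ~ subsumed (cnf_axioms F) w (node_clause a i).

Lemma valid_bad_node_bad_pred a i : node_valid F n w L a i -> bad_node a i ->
  exists j, [/\ j < i, bad_node a j & j \in queried_blocks a i].
Proof.
case/and3P=> _ _ + bad; rewrite /queried_blocks; have wi := width_node_clause a i.
case: ifP => _.
  case/hasP=> A hA /andP [_ hAC]; case: bad.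
  exact: subsumed_axiom hA (leq_trans (width_subclause hAC) wi) hAC.
case: ifP => _ => [/and4P [hj hk _ hr]|/andP [hj hs]]; last first.
  exists (Defs.pred1 n w L a i); rewrite /= hj !inE eqxx orbT; split => // good.
  exact/bad/(subsumed_weaken good hs).
case: (classic (bad_node a (Defs.pred1 n w L a i))) => [b1|/NNPP g1].
  by exists (Defs.pred1 n w L a i); rewrite /= hj hk !inE eqxx orbT.
case: (classic (bad_node a (Defs.pred2 n w L a i))) => [b2|/NNPP g2].
  by exists (Defs.pred2 n w L a i); rewrite /= hj hk !inE eqxx !orbT.
by case: bad; apply: subsumed_resolvent g1 g2 hr wi.
Qed.

Hypothesis no_narrow_refutation : ~ has_refutation_of_width (cnf_axioms F) w.
Variable W : nat.
Hypothesis block_width : 4 * bs <= W.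

Local Notation derivable_wLB := (derivable (wLB_axiom F n w L) W).

Lemma path_clause_derivable a i : i < L -> ~~ node_valid F n w L a i ->
  derivable_wLB (path_clause n w L a i).
Proof.
move=> hi hv; apply: derivable_axiom; first by exists i, a.
apply: leq_trans (width_le_size _) _; rewrite size_map.
by apply: leq_trans (size_queried_vars a i) _; lia.
Qed.

Lemma neg_block_derivable i a : i < L -> bad_node a i \/ i = L.-1 ->
  exists2 C, derivable_wLB C & subclause C (neg_assign a (block i)).
Proof.
elim/ltn_ind: i a => i IH a hiL hbad.
apply: (derivable_decision_tree (X := queried_vars a i)) => [|b].
  by rewrite size_map size_iota; have := size_queried_vars a i; lia.
(* [a'] reads block [i] as [a] does, hence follows the same branch, and the
   leaf's values [b] elsewhere. *)
pose a' := override a b (block i).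
have agree : {in block i, a =1 a'} by move=> p hp; rewrite /a' /override hp.
suff [C dC hC] : exists2 C, derivable_wLB C & subclause C (neg_assign a' (queried_vars a' i)).
  exists C => //; apply: subclause_trans hC _.
  by rewrite -(queried_vars_eq_in agree); apply: neg_assign_override.
have [valid|invalid] := boolP (node_valid F n w L a' i); last first.
  by exists (path_clause n w L a' i); [apply: path_clause_derivable | apply: subclause_refl].
have bad : bad_node a' i.
  case: hbad => [|last]; first by rewrite /bad_node -(node_clause_eq_in agree).
  move: (valid); rewrite /node_valid last eqxx => /and3P [_ /eqP nil _].
  by rewrite /bad_node nil => /subsumed_nil_refutation.
have [j [ji bad_j qj]] := valid_bad_node_bad_pred valid bad.
have [C dC hC] := IH j ji a' (ltn_trans ji hiL) (or_introl bad_j).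
by exists C => //; apply: subclause_trans hC (neg_assign_subset _ (block_sub_queried_vars qj)).
Qed.

Lemma wLB_refutation : 0 < L -> has_refutation_of_width (wLB_axiom F n w L) W.
Proof.
move=> hL; apply: subsumed_nil_refutation.
apply: (derivable_decision_tree (X := block L.-1)) => [|b].
  by rewrite size_iota addn0; apply: leq_trans block_width; rewrite leq_pmull.
by rewrite cats0; apply: neg_block_derivable; [rewrite prednK | right].
Qed.

End Encoding.

Lemma block_size_le_log n w L : n <= L -> 0 < L ->
  4 * block_size n w L <= 12 * w.+1 * (up_log 2 (wLB_nvars n w L)).+1.
Proof.
move=> hn hL; set U := up_log 2 _.
have hLN : L <= wLB_nvars n w L by rewrite /wLB_nvars leq_pmulr // /block_size addn2.
have hv : var_bits n <= U by apply/leq_up_log/(leq_trans hn hLN).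
have hi : idx_bits L <= U by apply: leq_up_log.
have : w * var_bits n <= w * U by rewrite leq_mul2l hv orbT.
rewrite /block_size /slot_size; nia.
Qed.

Theorem theorem6p1 :
  exists c : nat,
  forall (nv wF : nat -> nat) (F : nat -> cnf),
    (forall n, all (fun C => all (fun l : lit => l.1 < nv n) C) (F n)) ->
    (forall n, ~ satisfiable (F n)) ->
    (forall n, ~ has_refutation_of_width (cnf_axioms (F n)) (wF n)) ->
    forall n L : nat, 0 < L -> nv n <= L ->
      has_refutation_of_width (wLB_axiom (F n) (nv n) (wF n) L)
        (c * (wF n).+1 * (up_log 2 (wLB_nvars (nv n) (wF n) L)).+1).
Proof.
exists 12 => nv wF F _ _ no_narrow n L hL hn.
apply: wLB_refutation (hL); [exact: no_narrow | exact: block_size_le_log hn hL].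
Qed.
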